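(* Let $J^r:\mathbb{R}^n\to\mathbb{R}^k$ be continuously differentiable, let $\epsilon\in[0,\infty)^k$, and let $$P_2^r:=\Big\{u\in\mathbb{R}^n:\min_{\alpha\in\Delta_k}\big(\|DJ^r(u)^\top\alpha\|_2^2-(\alpha^\top\epsilon)^2\big)\le 0\Big\}.$$ Then for every $\tilde u\in P_2^r$ there exists a continuously differentiable $\tilde J:\mathbb{R}^n\to\mathbb{R}^k$ with $$\sup_{u\in\mathbb{R}^n}\|\nabla\tilde J_i(u)-\nabla J^r_i(u)\|_2\le\epsilon_i\quad\text{for all } i\in\{1,\dots,k\}$$ such that $\tilde u$ is Pareto critical for $\tilde J$.
   Context: $\Delta_k:=\{\alpha\in[0,\infty)^k:\sum_{i=1}^k\alpha_i=1\}$. $DJ(u)\in\mathbb{R}^{k\times n}$ denotes the Jacobian, so $DJ(u)^\top\alpha=\sum_i\alpha_i\nabla J_i(u)$. A point $\tilde u$ is Pareto critical for $\tilde J$ if there is $\alpha\in\Delta_k$ with $D\tilde J(\tilde u)^\top\alpha=0$. *)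

From Stdlib Require Import Reals.
From mathcomp Require Import ssreflect ssrfun ssrbool eqtype ssrnat seq fintype bigop.

Set Implicit Arguments.
Unset Strict Implicit.
Unset Printing Implicit Defensive.

Local Open Scope R_scope.

Definition vec (n : nat) := 'I_n -> R.

Definition vsum (n : nat) (f : 'I_n -> R) : R := \big[Rplus/0]_(i < n) f i.

Definition vdot (n : nat) (x y : vec n) : R := vsum (fun i => x i * y i).

Definition vnorm (n : nat) (x : vec n) : R := sqrt (vdot x x).

Definition vadd (n : nat) (x y : vec n) : vec n := fun i => x i + y i.
Definition vsub (n : nat) (x y : vec n) : vec n := fun i => x i - y i.

Definition has_gradient_at (n : nat) (f : vec n -> R) (u : vec n) (g : vec n) : Prop :=
  forall eps : R, 0 < eps -> exists delta : R, 0 < delta /\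
    forall h : vec n, vnorm h < delta ->
      Rabs (f (vadd u h) - f u - vdot g h) <= eps * vnorm h.

Definition vcontinuous (n : nat) (G : vec n -> vec n) : Prop :=
  forall u : vec n, forall eps : R, 0 < eps -> exists delta : R, 0 < delta /\
    forall v : vec n, vnorm (vsub v u) < delta -> vnorm (vsub (G v) (G u)) < eps.

(* J : R^n -> R^k is continuously differentiable, with gradients
   G i u = grad J_i (u) (the rows of the Jacobian DJ(u)). *)
Definition C1_with_gradients (n k : nat) (J : vec n -> vec k) (G : 'I_k -> vec n -> vec n) : Prop :=
  forall i : 'I_k,
    (forall u : vec n, has_gradient_at (fun v => J v i) u (G i u)) /\ vcontinuous (G i).

Definition in_simplex (k : nat) (a : vec k) : Prop :=
  (forall i, 0 <= a i) /\ vsum a = 1.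

Definition jacT_mul (n k : nat) (G : 'I_k -> vec n -> vec n) (u : vec n) (a : vec k) : vec n :=
  fun j => vsum (fun i => a i * G i u j).

Definition pareto_critical (n k : nat) (G : 'I_k -> vec n -> vec n) (ut : vec n) : Prop :=
  exists a : vec k, in_simplex a /\ forall j, jacT_mul G ut a j = 0.

(* u in P_2^r : min over the simplex of ||DJ(u)^T a||^2 - (a^T eps)^2 is <= 0
   (the minimum is attained by compactness, so this is: some a attains value <= 0) *)
Definition in_P2 (n k : nat) (G : 'I_k -> vec n -> vec n) (eps : vec k) (u : vec n) : Prop :=
  exists a : vec k, in_simplex a /\
    (vnorm (jacT_mul G u a)) ^ 2 - (vdot a eps) ^ 2 <= 0.

From Stdlib Require Import Reals Lra.
From mathcomp Require Import ssreflect ssrfun ssrbool eqtype ssrnat seq fintype bigop.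
From mathcomp Require Import Rstruct.

(* Let a in the simplex witness ut in P_2^r, put
   v := DJ^r(ut)^T a and s := a^T eps >= 0; the P_2^r condition says
   ||v|| <= s.  Choose t >= 0 with t ||v|| <= 1 and (1 - s t) v = 0
   (t = 1/s if s > 0; if s = 0 then v = 0 and t = 0 will do), and set
       J~_i(u) := J^r_i(u) - eps_i t <v, u>.
   Each J~_i differs from J^r_i by a linear function, so it is C^1 with
   gradient grad J^r_i - eps_i t v, which is within eps_i t ||v|| <= eps_i
   of grad J^r_i uniformly in u.  Finally
   DJ~(ut)^T a = v - (a^T eps) t v = (1 - s t) v = 0.
   The file first collects elementary facts on finite sums and norms, then
   shows that linear perturbations preserve continuous differentiability,
   then the three ingredients above, and concludes. *)

Local Open Scope R_scope.

Section FiniteSums.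
Context {n : nat}.

Lemma vsum_ext (f g : 'I_n -> R) : (forall i, f i = g i) -> vsum f = vsum g.
Proof. by move=> fg; apply: eq_bigr => i _. Qed.

Lemma vsum_add (f g : 'I_n -> R) : vsum (fun i => f i + g i) = vsum f + vsum g.
Proof. exact: big_split. Qed.

Lemma vsum_scal (r : R) (f : 'I_n -> R) : vsum (fun i => r * f i) = r * vsum f.
Proof. by rewrite /vsum big_distrr. Qed.

Lemma vsum_nonneg (f : 'I_n -> R) : (forall i, 0 <= f i) -> 0 <= vsum f.
Proof. by move=> f_ge0; apply: big_ind => //; [lra | move=> x y; lra]. Qed.

Lemma vsum_ge_term (f : 'I_n -> R) (j : 'I_n) :
  (forall i, 0 <= f i) -> f j <= vsum f.
Proof.
move=> f_ge0; rewrite /vsum (bigD1 j) //= -{1}(Rplus_0_r (f j)).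
apply: Rplus_le_compat_l.
by apply: big_ind => [|x y|i _]; [lra | lra | apply: f_ge0].
Qed.

End FiniteSums.

Arguments vsum_ext {n f g} _.

Section EuclideanNorm.
Context {n : nat}.
Implicit Types x y : vec n.

Lemma vdot_ge0 x : 0 <= vdot x x.
Proof. by apply: vsum_nonneg => i; nra. Qed.

Lemma vnorm_ge0 x : 0 <= vnorm x.
Proof. exact: sqrt_pos. Qed.

Lemma vnorm_sq x : vnorm x ^ 2 = vdot x x.
Proof. by rewrite /vnorm /= Rmult_1_r sqrt_sqrt //; apply: vdot_ge0. Qed.

Lemma vnorm_eq0 x j : vnorm x = 0 -> x j = 0.
Proof.
move=> x0; have := vnorm_sq x; rewrite x0 /= Rmult_0_l => dot0.
have := @vsum_ge_term n (fun i => x i * x i) j (fun i => ltac:(nra)).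
rewrite -/(vdot x x) -dot0; nra.
Qed.

Lemma vnorm_ext x y : (forall j, x j = y j) -> vnorm x = vnorm y.
Proof. by move=> xy; rewrite /vnorm /vdot (vsum_ext (fun j => f_equal2 Rmult (xy j) (xy j))). Qed.

Lemma vnorm_scal (r : R) x : vnorm (fun j => r * x j) = Rabs r * vnorm x.
Proof.
rewrite /vnorm /vdot (vsum_ext (g := fun i => (r * r) * (x i * x i))); last by move=> i; ring.
rewrite vsum_scal sqrt_mult; [by rewrite -sqrt_Rsqr_abs | nra | exact: vdot_ge0].
Qed.

End EuclideanNorm.

Arguments vnorm_ext {n x y} _.
Arguments vnorm_eq0 {n x} j _.

Section LinearPerturbation.
Variable n : nat.

Lemma has_gradient_add_linear (f : vec n -> R) (u g c : vec n) :
  has_gradient_at f u g ->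
  has_gradient_at (fun x => f x + vdot c x) u (vadd g c).
Proof.
move=> fg e e_gt0; have [d [d_gt0 fd]] := fg e e_gt0.
exists d; split=> // h h_lt.
suff -> : f (vadd u h) + vdot c (vadd u h) - (f u + vdot c u) - vdot (vadd g c) h
          = f (vadd u h) - f u - vdot g h by exact: fd.
rewrite /vdot /vadd (vsum_ext (g := fun j => c j * u j + c j * h j)); last by move=> j; ring.
rewrite (vsum_ext (f := fun j => (g j + c j) * h j) (g := fun j => g j * h j + c j * h j));
  last by move=> j; ring.
rewrite !vsum_add; ring.
Qed.

Lemma vcontinuous_add_const (G : vec n -> vec n) (c : vec n) :
  vcontinuous G -> vcontinuous (fun u => vadd (G u) c).
Proof.
move=> Gc u e e_gt0; have [d [d_gt0 Gd]] := Gc u e e_gt0.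
exists d; split=> // w w_lt.
rewrite (vnorm_ext (y := vsub (G w) (G u))); first exact: Gd.
by move=> j; rewrite /vsub /vadd; ring.
Qed.

Lemma C1_add_linear (k : nat) (J : vec n -> vec k) (G : 'I_k -> vec n -> vec n)
    (c : 'I_k -> vec n) :
  C1_with_gradients J G ->
  C1_with_gradients (fun u i => J u i + vdot (c i) u) (fun i u => vadd (G i u) (c i)).
Proof.
move=> JG i; have [grad cont] := JG i; split.
- by move=> u; apply: has_gradient_add_linear.
- exact: vcontinuous_add_const.
Qed.

Lemma jacT_mul_shift (k : nat) (G : 'I_k -> vec n -> vec n) (b : vec k) (w u : vec n)
    (a : vec k) (j : 'I_n) :
  jacT_mul (fun i u => vadd (G i u) (fun l => b i * w l)) u a j
  = jacT_mul G u a j + vdot a b * w j.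
Proof.
rewrite /jacT_mul /vadd /vdot.
rewrite (vsum_ext (g := fun i => a i * G i u j + w j * (a i * b i))); last by move=> i; ring.
rewrite vsum_add vsum_scal; ring.
Qed.

End LinearPerturbation.

Lemma P2_norm_bound {n k : nat} {G : 'I_k -> vec n -> vec n} {eps : vec k} {u : vec n}
    {a : vec k} :
  (forall i, 0 <= eps i) -> in_simplex a ->
  vnorm (jacT_mul G u a) ^ 2 - vdot a eps ^ 2 <= 0 ->
  0 <= vdot a eps /\ vnorm (jacT_mul G u a) <= vdot a eps.
Proof.
move=> eps_ge0 [a_ge0 _] ineq.
have s_ge0 : 0 <= vdot a eps by apply: vsum_nonneg => i; apply: Rmult_le_pos.
have := vnorm_ge0 (jacT_mul G u a); split=> //; nra.
Qed.

Lemma scaling_factor {n : nat} {v : vec n} {s : R} :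
  vnorm v <= s ->
  exists t, 0 <= t /\ t * vnorm v <= 1 /\ forall j, (1 - s * t) * v j = 0.
Proof.
move=> v_le; have v_ge0 := vnorm_ge0 v.
case: (Req_dec s 0) => [s0 | s_neq0].
- exists 0; split; [lra | split; [lra | move=> j]].
  by rewrite (vnorm_eq0 j (ltac:(lra) : vnorm v = 0)); ring.
- have s_gt0 : 0 < s by lra.
  exists (/ s); split; first by apply/Rlt_le/Rinv_0_lt_compat.
  split; last by move=> j; rewrite Rinv_r //; ring.
  rewrite -(Rinv_l s) //; apply: Rmult_le_compat_l => //.
  by apply/Rlt_le/Rinv_0_lt_compat.
Qed.

Theorem mainTheorem3 (n k : nat) (Jr : vec n -> vec k) (Gr : 'I_k -> vec n -> vec n)
    (hJr : C1_with_gradients Jr Gr)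
    (eps : vec k) (heps : forall i, 0 <= eps i)
    (ut : vec n) (hut : in_P2 Gr eps ut) :
  exists (Jt : vec n -> vec k) (Gt : 'I_k -> vec n -> vec n),
    C1_with_gradients Jt Gt /\
    (forall i : 'I_k, forall u : vec n, vnorm (vsub (Gt i u) (Gr i u)) <= eps i) /\
    pareto_critical Gt ut.
Proof.
have [a [a_simplex P2a]] := hut.
have [s_ge0 v_le] := P2_norm_bound heps a_simplex P2a.
have [t [t_ge0 [tv_le1 v_killed]]] := scaling_factor v_le.
set v := jacT_mul Gr ut a in tv_le1 v_killed *; set s := vdot a eps in v_killed *.
pose b i := - (eps i * t).
pose c i := fun j => b i * v j.
exists (fun u i => Jr u i + vdot (c i) u), (fun i u => vadd (Gr i u) (c i)).
split; [exact: C1_add_linear | split].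
- move=> i u; rewrite (vnorm_ext (y := c i)); last by move=> j; rewrite /vsub /vadd; ring.
  rewrite vnorm_scal Rabs_Ropp Rabs_pos_eq; last exact: Rmult_le_pos.
  rewrite Rmult_assoc -{2}(Rmult_1_r (eps i)); exact: Rmult_le_compat_l (heps i) tv_le1.
- exists a; split=> // j; rewrite jacT_mul_shift -/v.
  have -> : vdot a b = - (t * s).
    rewrite /vdot /b (vsum_ext (g := fun i => - t * (a i * eps i))); last by move=> i; ring.
    by rewrite vsum_scal /s /vdot; ring.
  by move: (v_killed j); clear c; clearbody v s; lra.
Qed.
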